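(* $\mathsf{LDL}\equiv_{sW}\mathsf{C}_\mathbb{N}$.
   Context: A represented space is a pair $(X,\delta_X)$ with $\delta_X:\subseteq\mathbb{N}^\mathbb{N}\to X$ a partial surjection. A realizer of $f:\subseteq X\rightrightarrows Y$ is a partial $F$ with $\delta_Y F(p)\in f(\delta_X(p))$ for all $p\in\mathrm{dom}(f\circ\delta_X)$. $f\le_{sW}g$ if there are computable partial $H,K:\subseteq\mathbb{N}^\mathbb{N}\to\mathbb{N}^\mathbb{N}$ such that $HGK$ realizes $f$ for every realizer $G$ of $g$; $\equiv_{sW}$ is the induced equivalence. $\mathcal{A}_-(X)$ denotes closed subsets of $X$ represented by negative information (for $\mathbb N$: a name of $A$ enumerates $\mathbb N\setminus A$; for $2^\mathbb N$: a name enumerates words $w$ such that the union of the cylinders $w2^\mathbb N$ is $2^\mathbb N\setminus A$). $\mathsf C_\mathbb N:\subseteq\mathcal A_-(\mathbb N)\rightrightarrows\mathbb N$, $A\mapsto A$, defined on nonempty $A$. $\mu$ is the uniform measure on $2^\mathbb N$ with $\mu(w2^\mathbb N)=2^{-|w|}$. The Lebesgue Density Lemma problem is $\mathsf{LDL}:\subseteq\mathcal A_-(2^\mathbb N)\times\mathbb N\rightrightarrows\{0,1\}^*$, $(A,k)\mapsto\{w\in\{0,1\}^*:\mu(A\cap w2^\mathbb N)/2^{-|w|}\ge 1-2^{-k}\}$, with domain $\{(A,k):\mu(A)>0\}$. *)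

From Stdlib Require Import Reals List Arith.
Import ListNotations.
Set Implicit Arguments.

Definition baire := nat -> nat.

(** * Oracle (Kleene) mu-recursive functionals: the model of computation. Arities are not enforced; missing arguments default to 0. *)
Inductive oterm : Type :=
| OZero
| OSucc
| OProj (i : nat)
| OOracle
| OComp (f : oterm) (gs : list oterm)
| OPrec (f g : oterm)
| OMu (f : oterm).

Inductive oeval (p : baire) : oterm -> list nat -> nat -> Prop :=
| ev_zero a : oeval p OZero a 0
| ev_succ a : oeval p OSucc a (S (hd 0 a))
| ev_proj i a : oeval p (OProj i) a (nth i a 0)
| ev_oracle a : oeval p OOracle a (p (hd 0 a))
| ev_comp f gs a vs v :
    Forall2 (fun g w => oeval p g a w) gs vs ->
    oeval p f vs v -> oeval p (OComp f gs) a v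
| ev_prec0 f g xs v :
    oeval p f xs v -> oeval p (OPrec f g) (0 :: xs) v
| ev_precS f g n xs r v :
    oeval p (OPrec f g) (n :: xs) r ->
    oeval p g (n :: r :: xs) v -> oeval p (OPrec f g) (S n :: xs) v
| ev_mu f a y :
    oeval p f (y :: a) 0 ->
    (forall z, z < y -> exists m, oeval p f (z :: a) (S m)) ->
    oeval p (OMu f) a y.

(** The partial computable map Baire -> Baire computed by [t]:
    on input [p] it outputs [q] iff every [q n] is computed from oracle [p]
    on input [n]. (Defined at [p] iff all these computations halt.) *)
Definition computes (t : oterm) (p q : baire) : Prop :=
  forall n, oeval p t [n] (q n).

Record repspace : Type := RepSpace {
  carrier :> Type;
  delta : baire -> option carrier }.

Record problem (X Y : repspace) : Type := Problem {
  pdom : X -> Prop;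
  prel : X -> Y -> Prop }.

Definition realizer (X Y : repspace) (g : problem X Y)
    (G : baire -> option baire) : Prop :=
  forall p x, delta X p = Some x -> pdom g x ->
    exists q, G p = Some q /\
      exists y, delta Y q = Some y /\ prel g x y.

(** [H o G o K] realizes [f], where [H], [K] are the partial computable maps
    computed by [tH], [tK]. *)
Definition comp_realizes (X Y : repspace) (f : problem X Y)
    (tH : oterm) (G : baire -> option baire) (tK : oterm) : Prop :=
  forall p x, delta X p = Some x -> pdom f x ->
    (exists q, computes tK p q) /\
    forall q, computes tK p q ->
      exists r, G q = Some r /\
        (exists s, computes tH r s) /\
        forall s, computes tH r s ->
          exists y, delta Y s = Some y /\ prel f x y.

Definition sW_le (X Y Z W : repspace) (f : problem X Y) (g : problem Z W) : Prop :=
  exists tH tK : oterm, forall G, realizer g G -> comp_realizes f tH G tK.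

Definition sW_equiv (X Y Z W : repspace) (f : problem X Y) (g : problem Z W) : Prop :=
  sW_le f g /\ sW_le g f.

Definition NatRep : repspace := @RepSpace nat (fun p => Some (p 0)).

(** Coding of finite binary words by natural numbers (a bijection):
    0 |-> [], 2k+1 |-> false :: w_k, 2k+2 |-> true :: w_k. *)
Fixpoint word_aux (fuel n : nat) : list bool :=
  match fuel with
  | 0 => []
  | S fu =>
    match n with
    | 0 => []
    | S m => (if Nat.odd m then true else false) :: word_aux fu (Nat.div2 m)
    end
  end.
Definition word_of_nat (n : nat) : list bool := word_aux n n.

Definition WordRep : repspace := @RepSpace (list bool) (fun p => Some (word_of_nat (p 0))).

(** A_-(N): p names the complement of {n | exists i, p i = n+1}
    (the value 0 is a "no information" padding symbol). *)
Definition ClosedNatRep : repspace :=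
  @RepSpace (nat -> Prop) (fun p => Some (fun n => ~ exists i, p i = S n)).

Definition cantor := nat -> bool.
Definition is_prefix (w : list bool) (x : cantor) : Prop :=
  forall j, j < length w -> nth j w false = x j.

(** A_-(2^N): p enumerates (codes+1 of) words w such that the union of
    the cylinders w2^N is the complement of the named set. *)
Definition ClosedCantorRep : repspace :=
  @RepSpace (cantor -> Prop)
    (fun p => Some (fun x => forall i m, p i = S m -> ~ is_prefix (word_of_nat m) x)).

Definition ProdRep (X Y : repspace) : repspace :=
  @RepSpace (X * Y)%type
    (fun p => match delta X (fun i => p (2 * i)), delta Y (fun i => p (2 * i + 1)) with
              | Some x, Some y => Some (x, y)
              | _, _ => None
              end).

(** * Uniform (Lebesgue) measure on 2^N via the standard outer measure:
    the infimum over countable covers by cylinders of sum 2^{-|w|}. *)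
Local Open Scope R_scope.

Definition cyl_weight (o : option (list bool)) : R :=
  match o with None => 0 | Some w => / 2 ^ length w end.

Fixpoint psum (c : nat -> option (list bool)) (N : nat) : R :=
  match N with
  | O => 0
  | S N' => psum c N' + cyl_weight (c N')
  end.

Definition covers (c : nat -> option (list bool)) (S : cantor -> Prop) : Prop :=
  forall x, S x -> exists i w, c i = Some w /\ is_prefix w x.

(** mu_ge S r  :<->  mu*(S) >= r. *)
Definition mu_ge (S : cantor -> Prop) (r : R) : Prop :=
  forall c, covers c S -> forall r', r' < r -> exists N, r' < psum c N.

Definition mu_pos (S : cantor -> Prop) : Prop := exists r, 0 < r /\ mu_ge S r.

Definition C_N : problem ClosedNatRep NatRep :=
  @Problem ClosedNatRep NatRep (fun A => exists n, A n) (fun A n => A n).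

Definition LDL : problem (ProdRep ClosedCantorRep NatRep) WordRep :=
  @Problem (ProdRep ClosedCantorRep NatRep) WordRep
    (fun Ak => mu_pos (fst Ak))
    (fun Ak w => mu_ge (fun x => fst Ak x /\ is_prefix w x)
                       ((1 - / 2 ^ snd Ak) * / 2 ^ length w)).

From Stdlib Require Import Reals List Arith.
From Stdlib Require Import Lia Bool Lra Classical ClassicalEpsilon FunctionalExtensionality.
Import ListNotations.

(** König's lemma makes
    cylinders compact, so a cylinder [w] has outer measure at least 2^-|w|
    and a finite cover of length-[D] words is controlled by counting.

    - C_N <= LDL: from an enumeration of N \ A build the closed set B
      avoiding 0^j11 for all j and 0^m1 for every enumerated m; B has
      positive measure when A is nonempty, and any word of B-density
      >= 3/4 is 0^n1v with n in A, so counting leading zeros solves C_N.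
    - LDL <= C_N: a word w is rejected at stage s when less than a
      (1 - 2^-k) fraction of its length-s extensions avoid the first s
      enumerated forbidden cylinders.  Never-rejected words have density
      >= 1 - 2^-k (soundness), and some word is never rejected, for
      otherwise iterated rejections cover A by cylinders of total weight
      (1 - 2^-k)^j -> 0 (nonemptiness).  C_N receives the rejected codes. *)

Section KleeneTerms.
Variable p : baire.

Definition represents (w : nat) (t : oterm) (f : list nat -> nat) : Prop :=
  forall a, length a = w -> forall v, oeval p t a v <-> v = f a.

Lemma represents_zero w : represents w OZero (fun _ => 0).
Proof. intros a _ v; split; [intro H; inversion H; auto | intros ->; constructor]. Qed.

Lemma represents_succ w : represents w OSucc (fun a => S (hd 0 a)).
Proof. intros a _ v; split; [intro H; inversion H; auto | intros ->; constructor]. Qed.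

Lemma represents_proj w i : represents w (OProj i) (fun a => nth i a 0).
Proof. intros a _ v; split; [intro H; inversion H; auto | intros ->; constructor]. Qed.

Lemma represents_oracle w : represents w OOracle (fun a => p (hd 0 a)).
Proof. intros a _ v; split; [intro H; inversion H; auto | intros ->; constructor]. Qed.

Lemma represents_ext w t f g :
  represents w t f -> (forall a, length a = w -> f a = g a) -> represents w t g.
Proof. intros H E a Ha v. rewrite <- E by auto. apply H; auto. Qed.

Lemma represents_comp m w f F gs Gs (Fa : list nat -> nat) :
  represents m f F -> Forall2 (fun g G => represents w g G) gs Gs -> length gs = m ->
  (forall a, length a = w -> F (map (fun G => G a) Gs) = Fa a) ->
  represents w (OComp f gs) Fa.
Proof.
  intros HF HG Hl HH. apply (represents_ext _ _ (fun a => F (map (fun G => G a) Gs)));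
    [|exact HH].
  intros a Ha v.
  assert (Hargs : forall vs,
    Forall2 (fun g u => oeval p g a u) gs vs <-> vs = map (fun G => G a) Gs).
  { clear Hl HH. induction HG as [|g G gs' Gs' Hg _ IH]; intros vs; split.
    - intro H; inversion H; auto.
    - intros ->; constructor.
    - intro H; inversion H as [|? ? ? ? Hu Hus]; subst vs; simpl.
      f_equal; [apply (Hg a Ha) | apply IH]; auto.
    - intros ->; constructor; [apply (Hg a Ha)|apply IH]; auto. }
  assert (Hlen : length (map (fun G => G a) Gs) = m).
  { rewrite length_map, <- Hl. symmetry. eapply Forall2_length; eauto. }
  split.
  - intro H; inversion H as [| | | |? ? ? vs ? Hvs Hf| | |]; subst.
    apply Hargs in Hvs; subst vs. apply (HF _ Hlen); auto.
  - intros ->. econstructor; [apply Hargs; reflexivity | apply (HF _ Hlen); auto].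
Qed.

Fixpoint prim_rec (step : nat -> nat -> nat) (base n : nat) : nat :=
  match n with 0 => base | S m => step m (prim_rec step base m) end.

Lemma prim_rec_ext f g b n :
  (forall m r, f m r = g m r) -> prim_rec f b n = prim_rec g b n.
Proof. intros H; induction n; simpl; auto. rewrite IHn; auto. Qed.

Lemma represents_prec n f F g G :
  represents n f F -> represents (S (S n)) g G ->
  represents (S n) (OPrec f g)
    (fun a => prim_rec (fun m r => G (m :: r :: tl a)) (F (tl a)) (hd 0 a)).
Proof.
  intros HF HG [|x xs] Ha; [discriminate|]. injection Ha as Ha. subst n. simpl.
  induction x as [|x IH]; intros v; split.
  - intro H; inversion H; subst. apply (HF _ eq_refl); auto.
  - intros ->. constructor. apply (HF _ eq_refl); auto.
  - intro H; inversion H; subst.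
    match goal with
    | Hr : oeval p (OPrec f g) (x :: xs) ?r, Hg : oeval p g _ v |- _ =>
        apply IH in Hr; subst r; apply (HG (x :: _ :: xs)) in Hg; auto
    end.
  - intros ->. econstructor; [apply IH; reflexivity | apply (HG (x :: _ :: xs)); auto].
Qed.

End KleeneTerms.

(** Closes a [represents] goal for the composition of a represented
    function with represented arguments, definitionally matching the target. *)
Ltac represent_comp HF :=
  eapply represents_comp;
  [ apply HF
  | repeat (constructor; [first [apply represents_proj | eauto]|]); constructor
  | reflexivity
  | intros ? ?; reflexivity ].

Definition add_term : oterm := OPrec (OProj 0) (OComp OSucc [OProj 1]).
Definition mul_term : oterm := OPrec OZero (OComp add_term [OProj 1; OProj 2]).
Definition pred_term : oterm := OPrec OZero (OProj 0).
(** [sub_term] computes [a1 - a0] (truncated), recursing on [a0]. *)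
Definition sub_term : oterm := OPrec (OProj 0) (OComp pred_term [OProj 1]).

Lemma represents_add p : represents p 2 add_term (fun a => nth 0 a 0 + nth 1 a 0).
Proof.
  eapply represents_ext.
  - apply represents_prec; [apply represents_proj|].
    represent_comp represents_succ.
  - intros [|x [|y [|]]] H; try discriminate. simpl. clear H. induction x; simpl; auto.
Qed.

Lemma represents_mul p : represents p 2 mul_term (fun a => nth 0 a 0 * nth 1 a 0).
Proof.
  eapply represents_ext.
  - apply represents_prec; [apply represents_zero|].
    represent_comp represents_add.
  - intros [|x [|y [|]]] H; try discriminate. simpl. clear H. induction x; simpl; auto. lia.
Qed.

Lemma represents_pred p : represents p 1 pred_term (fun a => pred (hd 0 a)).
Proof.
  eapply represents_ext.
  - apply represents_prec; [apply represents_zero | apply represents_proj].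
  - intros [|x [|]] H; try discriminate. simpl. destruct x; auto.
Qed.

Lemma represents_sub p : represents p 2 sub_term (fun a => nth 1 a 0 - nth 0 a 0).
Proof.
  eapply represents_ext.
  - apply represents_prec; [apply represents_proj|].
    represent_comp represents_pred.
  - intros [|x [|y [|]]] H; try discriminate. simpl. clear H. induction x; simpl; [lia|].
    rewrite IHx. lia.
Qed.


(** ** A first-order language of oracle programs *)

(** Expressions over an argument list; [ERec n base step] is primitive
    recursion on the value of [n], the step being evaluated with arguments
    [m :: r :: a] (current index, previous value, outer arguments). *)
Inductive expr : Type :=
| EVar (i : nat)
| EConst (k : nat)
| ESucc (e : expr)
| EAdd (x y : expr)
| EMul (x y : expr)
| ESub (x y : expr)
| EOracle (x : expr)
| ERec (n base step : expr).

Fixpoint eval (p : baire) (a : list nat) (e : expr) : nat :=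
  match e with
  | EVar i => nth i a 0
  | EConst k => k
  | ESucc e => S (eval p a e)
  | EAdd x y => eval p a x + eval p a y
  | EMul x y => eval p a x * eval p a y
  | ESub x y => eval p a x - eval p a y
  | EOracle x => p (eval p a x)
  | ERec n base step =>
      prim_rec (fun m r => eval p (m :: r :: a) step) (eval p a base) (eval p a n)
  end.

Fixpoint const_term (k : nat) : oterm :=
  match k with 0 => OZero | S k => OComp OSucc [const_term k] end.

Fixpoint compile (w : nat) (e : expr) : oterm :=
  match e with
  | EVar i => OProj i
  | EConst k => const_term k
  | ESucc e => OComp OSucc [compile w e]
  | EAdd x y => OComp add_term [compile w x; compile w y]
  | EMul x y => OComp mul_term [compile w x; compile w y]
  | ESub x y => OComp sub_term [compile w y; compile w x]
  | EOracle x => OComp OOracle [compile w x]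
  | ERec n base step =>
      OComp (OPrec (compile w base) (compile (S (S w)) step))
            (compile w n :: map OProj (seq 0 w))
  end.

(** Listing the projections [0, ..., w - 1] reproduces the argument list;
    this is how [ERec] passes the outer arguments to [OPrec]. *)
Lemma map_nth_seq (a : list nat) : map (fun i => nth i a 0) (seq 0 (length a)) = a.
Proof.
  induction a as [|x a IH]; simpl; auto. f_equal.
  rewrite <- seq_shift, map_map. exact IH.
Qed.

Lemma represents_projs p w n s :
  Forall2 (fun g G => represents p w g G)
    (map OProj (seq s n)) (map (fun i a => nth i a 0) (seq s n)).
Proof. revert s; induction n; intros s; simpl; constructor; auto using represents_proj. Qed.

Lemma compile_correct p e : forall w, represents p w (compile w e) (fun a => eval p a e).
Proof.
  induction e; intros w; simpl.
  - apply represents_proj.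
  - induction k; simpl; [apply represents_zero|].
    represent_comp represents_succ.
  - represent_comp represents_succ.
  - represent_comp represents_add.
  - represent_comp represents_mul.
  - represent_comp represents_sub.
  - represent_comp represents_oracle.
  - eapply represents_comp.
    + apply (represents_prec p w); [apply IHe2 | apply IHe3].
    + constructor; [apply IHe1 | apply represents_projs].
    + simpl. rewrite length_map, length_seq. reflexivity.
    + intros a Ha. simpl. rewrite map_map, <- Ha, map_nth_seq. reflexivity.
Qed.

Lemma compile_computes p e q : computes (compile 1 e) p q <-> forall n, q n = eval p [n] e.
Proof.
  split; intros H n; apply (compile_correct p e 1 [n] eq_refl); [apply H | apply H].
Qed.

Definition run (e : expr) (p : baire) : baire := fun n => eval p [n] e.

Lemma sW_le_by_programs (X Y Z W : repspace) (f : problem X Y) (g : problem Z W)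
    (eK eH : expr) :
  (forall p x, delta X p = Some x -> pdom f x ->
     exists z, delta Z (run eK p) = Some z /\ pdom g z /\
       forall r y, delta W r = Some y -> prel g z y ->
         exists y', delta Y (run eH r) = Some y' /\ prel f x y') ->
  sW_le f g.
Proof.
  intros Hred. exists (compile 1 eH), (compile 1 eK). intros G HG p x Hp Hx.
  destruct (Hred p x Hp Hx) as [z [Hz [Hgz Hback]]]. split.
  - exists (run eK p). apply compile_computes. reflexivity.
  - intros q Hq. rewrite compile_computes in Hq.
    replace q with (run eK p) by (apply functional_extensionality; intro n; auto).
    destruct (HG _ _ Hz Hgz) as [r [Hr [y [Hy Hzy]]]].
    exists r. split; auto. split.
    + exists (run eH r). apply compile_computes. reflexivity.
    + intros s Hs. rewrite compile_computes in Hs.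
      replace s with (run eH r) by (apply functional_extensionality; intro n; auto).
      apply (Hback r y Hy Hzy).
Qed.

Fixpoint lift (c k : nat) (e : expr) : expr :=
  match e with
  | EVar i => if i <? c then EVar i else EVar (i + k)
  | EConst n => EConst n
  | ESucc e => ESucc (lift c k e)
  | EAdd x y => EAdd (lift c k x) (lift c k y)
  | EMul x y => EMul (lift c k x) (lift c k y)
  | ESub x y => ESub (lift c k x) (lift c k y)
  | EOracle x => EOracle (lift c k x)
  | ERec n z s => ERec (lift c k n) (lift c k z) (lift (S (S c)) k s)
  end.

Lemma eval_lift p e : forall b l a,
  eval p (b ++ l ++ a) (lift (length b) (length l) e) = eval p (b ++ a) e.
Proof.
  induction e; intros b l a; simpl; try (rewrite ?IHe, ?IHe1, ?IHe2; reflexivity).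
  - destruct (Nat.ltb_spec i (length b)); simpl.
    + rewrite !app_nth1; auto.
    + rewrite !app_nth2 by lia. f_equal. lia.
  - rewrite IHe1, IHe2. apply prim_rec_ext. intros m r.
    apply (IHe3 (m :: r :: b) l a).
Qed.

Lemma eval_lift0 p e x a : eval p (x :: a) (lift 0 1 e) = eval p a e.
Proof. apply (eval_lift p e [] [x] a). Qed.

Lemma eval_lift1 p e j x a : eval p (j :: x :: a) (lift 1 1 e) = eval p (j :: a) e.
Proof. apply (eval_lift p e [j] [x] a). Qed.

Fixpoint nsum (n : nat) (f : nat -> nat) : nat :=
  match n with 0 => 0 | S n => nsum n f + f n end.
Fixpoint nprod (n : nat) (f : nat -> nat) : nat :=
  match n with 0 => 1 | S n => nprod n f * f n end.
Fixpoint all_lt (n : nat) (f : nat -> bool) : bool :=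
  match n with 0 => true | S n => all_lt n f && f n end.

Lemma nsum_ext n f g : (forall j, j < n -> f j = g j) -> nsum n f = nsum n g.
Proof. induction n; simpl; intros H; auto. rewrite IHn, H; auto. Qed.
Lemma nprod_ext n f g : (forall j, j < n -> f j = g j) -> nprod n f = nprod n g.
Proof. induction n; simpl; intros H; auto. rewrite IHn, H; auto. Qed.
Lemma all_lt_ext n f g : (forall j, j < n -> f j = g j) -> all_lt n f = all_lt n g.
Proof. induction n; simpl; intros H; auto. rewrite IHn, H; auto. Qed.

Lemma nprod_b2n n f : nprod n (fun i => Nat.b2n (f i)) = Nat.b2n (all_lt n f).
Proof. induction n; simpl; auto. rewrite IHn. destruct (all_lt n f), (f n); reflexivity. Qed.

Lemma all_lt_true n f : all_lt n f = true <-> forall i, i < n -> f i = true.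
Proof.
  induction n; simpl. { split; auto; intros; lia. }
  rewrite andb_true_iff, IHn. split.
  - intros [H1 H2] i Hi. destruct (Nat.eq_dec i n); subst; auto. apply H1; lia.
  - intros H. split; [intros; apply H; lia | apply H; lia].
Qed.

Lemma all_lt_S n f : all_lt (S n) f = f 0 && all_lt n (fun i => f (S i)).
Proof.
  induction n; simpl; [destruct (f 0); reflexivity|].
  change (all_lt (S n) f && f (S n) = f 0 && (all_lt n (fun i => f (S i)) && f (S n))).
  rewrite IHn, andb_assoc. reflexivity.
Qed.

Lemma nsum_add n f g : nsum n (fun i => f i + g i) = nsum n f + nsum n g.
Proof. induction n; simpl; auto. rewrite IHn. lia. Qed.

Lemma nsum_le_term n f i : i < n -> f i <= nsum n f.
Proof.
  induction n; simpl; intros H; [lia|].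
  destruct (Nat.eq_dec i n); [subst; lia|]. specialize (IHn ltac:(lia)). lia.
Qed.

Lemma nsum_double n f : nsum (2 * n) f = nsum n (fun j => f (2 * j) + f (S (2 * j))).
Proof.
  induction n; [reflexivity|]. replace (2 * S n) with (S (S (2 * n))) by lia.
  cbn [nsum]. rewrite IHn. lia.
Qed.

Lemma nsum_below c n : n <= c -> nsum c (fun j => Nat.b2n (j <? n)) = n.
Proof.
  induction c; simpl; intros H; [lia|].
  destruct (Nat.eq_dec n (S c)) as [->|Hn].
  - rewrite (nsum_ext _ _ (fun _ => 1)).
    + assert (Hc : forall k, nsum k (fun _ => 1) = k) by (induction k; simpl; lia).
      rewrite Hc. destruct (Nat.ltb_spec c (S c)); simpl; lia.
    + intros j Hj. destruct (Nat.ltb_spec j (S c)); simpl; lia.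
  - rewrite IHc by lia. destruct (Nat.ltb_spec c n); simpl; lia.
Qed.

(** Bounded sums and products (the body sees the index as [EVar 0]), parity,
    halving and powers of two. *)
Definition e_sum (n body : expr) : expr := ERec n (EConst 0) (EAdd (EVar 1) (lift 1 1 body)).
Definition e_prod (n body : expr) : expr := ERec n (EConst 1) (EMul (EVar 1) (lift 1 1 body)).
Definition e_odd (x : expr) : expr := ERec x (EConst 0) (ESub (EConst 1) (EVar 1)).
Definition e_div2 (x : expr) : expr := ERec x (EConst 0) (EAdd (EVar 1) (e_odd (EVar 0))).
Definition e_pow2 (x : expr) : expr := ERec x (EConst 1) (EAdd (EVar 1) (EVar 1)).
(** Booleans are represented by 0 and 1; [e_not] is also the test [x = 0]. *)
Definition e_not (x : expr) : expr := ESub (EConst 1) x.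
Definition e_and (x y : expr) : expr := EMul x y.
Definition e_or (x y : expr) : expr := e_not (e_and (e_not x) (e_not y)).
Definition e_eqb (x y : expr) : expr := e_not (EAdd (ESub x y) (ESub y x)).
Definition e_ltb (x y : expr) : expr := e_not (e_not (ESub y x)).
Definition e_if (c x y : expr) : expr := EAdd (EMul c x) (EMul (e_not c) y).

Lemma eval_sum p a n body :
  eval p a (e_sum n body) = nsum (eval p a n) (fun j => eval p (j :: a) body).
Proof. simpl. induction (eval p a n); simpl; auto. rewrite IHn0, eval_lift1. reflexivity. Qed.

Lemma eval_prod p a n body :
  eval p a (e_prod n body) = nprod (eval p a n) (fun j => eval p (j :: a) body).
Proof. simpl. induction (eval p a n); simpl; auto. rewrite IHn0, eval_lift1. reflexivity. Qed.

Lemma eval_odd p a x : eval p a (e_odd x) = Nat.b2n (Nat.odd (eval p a x)).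
Proof.
  simpl. induction (eval p a x); simpl; auto.
  rewrite IHn, Nat.odd_succ, <- Nat.negb_odd. destruct (Nat.odd n); reflexivity.
Qed.

Lemma div2_S n : Nat.div2 (S n) = Nat.div2 n + Nat.b2n (Nat.odd n).
Proof.
  pose proof (Nat.div2_odd n) as H1. pose proof (Nat.div2_odd (S n)) as H2.
  rewrite Nat.odd_succ, <- Nat.negb_odd in H2. destruct (Nat.odd n); simpl in *; lia.
Qed.

Lemma eval_div2 p a x : eval p a (e_div2 x) = Nat.div2 (eval p a x).
Proof.
  unfold e_div2. cbn [eval]. induction (eval p a x); [reflexivity|]. cbn [prim_rec].
  rewrite IHn. change (Nat.div2 n + eval p (n :: Nat.div2 n :: a) (e_odd (EVar 0))
    = Nat.div2 (S n)).
  rewrite eval_odd, div2_S. reflexivity.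
Qed.

Lemma eval_pow2 p a x : eval p a (e_pow2 x) = 2 ^ eval p a x.
Proof. simpl. induction (eval p a x); simpl; auto. rewrite IHn. lia. Qed.

Lemma eval_not p a x : eval p a (e_not x) = Nat.b2n (eval p a x =? 0).
Proof. simpl. destruct (eval p a x); reflexivity. Qed.

Lemma eval_not_bool p a x b : eval p a x = Nat.b2n b -> eval p a (e_not x) = Nat.b2n (negb b).
Proof. intros H. simpl. rewrite H. destruct b; reflexivity. Qed.

Lemma eval_and p a x y b1 b2 : eval p a x = Nat.b2n b1 -> eval p a y = Nat.b2n b2 ->
  eval p a (e_and x y) = Nat.b2n (b1 && b2).
Proof. intros H1 H2. simpl. rewrite H1, H2. destruct b1, b2; reflexivity. Qed.

Lemma eval_or p a x y b1 b2 : eval p a x = Nat.b2n b1 -> eval p a y = Nat.b2n b2 ->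
  eval p a (e_or x y) = Nat.b2n (b1 || b2).
Proof. intros H1 H2. simpl. rewrite H1, H2. destruct b1, b2; reflexivity. Qed.

Lemma eval_eqb p a x y b1 b2 : eval p a x = Nat.b2n b1 -> eval p a y = Nat.b2n b2 ->
  eval p a (e_eqb x y) = Nat.b2n (Bool.eqb b1 b2).
Proof. intros H1 H2. simpl. rewrite H1, H2. destruct b1, b2; reflexivity. Qed.

Lemma eval_ltb p a x y : eval p a (e_ltb x y) = Nat.b2n (eval p a x <? eval p a y).
Proof.
  simpl. destruct (Nat.ltb_spec (eval p a x) (eval p a y)).
  - replace (eval p a y - eval p a x) with (S (eval p a y - eval p a x - 1)) by lia. reflexivity.
  - replace (eval p a y - eval p a x) with 0 by lia. reflexivity.
Qed.

Lemma eval_if p a c x y b : eval p a c = Nat.b2n b ->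
  eval p a (e_if c x y) = if b then eval p a x else eval p a y.
Proof. intros H. simpl. rewrite H. destruct b; simpl; lia. Qed.

(** ** Coding of binary words *)

Lemma div2_le n : Nat.div2 n <= n.
Proof. pose proof (Nat.div2_odd n). destruct (Nat.odd n); simpl in *; lia. Qed.

Lemma word_aux_fuel f1 : forall f2 n, n <= f1 -> n <= f2 -> word_aux f1 n = word_aux f2 n.
Proof.
  induction f1; intros f2 n H1 H2.
  - replace n with 0 by lia. destruct f2; reflexivity.
  - destruct f2; [replace n with 0 by lia; reflexivity|].
    destruct n; simpl; [reflexivity|]. f_equal.
    apply IHf1; pose proof (Nat.le_div2 n); pose proof (div2_le n); lia.
Qed.

Lemma word_of_nat_S m : word_of_nat (S m) = Nat.odd m :: word_of_nat (Nat.div2 m).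
Proof.
  unfold word_of_nat. simpl. f_equal.
  - destruct (Nat.odd m); reflexivity.
  - apply word_aux_fuel; pose proof (div2_le m); lia.
Qed.

(** A code is at least the length of its word; so [c] bounds every loop on [c]. *)
Lemma word_of_nat_length c : length (word_of_nat c) <= c.
Proof.
  induction c as [c IH] using lt_wf_ind. destruct c as [|c]; [simpl; lia|].
  rewrite word_of_nat_S. simpl. pose proof (div2_le c).
  specialize (IH (Nat.div2 c) ltac:(lia)). lia.
Qed.

Lemma word_of_nat_double x : word_of_nat (S (2 * x)) = false :: word_of_nat x.
Proof. rewrite word_of_nat_S, Nat.div2_double, Nat.odd_mul. reflexivity. Qed.

Fixpoint nat_of_word (w : list bool) : nat :=
  match w with [] => 0 | b :: w => S (2 * nat_of_word w + Nat.b2n b) end.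

Lemma word_of_nat_of_word w : word_of_nat (nat_of_word w) = w.
Proof.
  induction w as [|b w IH]; [reflexivity|]. cbn [nat_of_word]. rewrite word_of_nat_S.
  replace (2 * nat_of_word w + Nat.b2n b) with (Nat.b2n b + 2 * nat_of_word w) by lia.
  f_equal.
  - rewrite Nat.odd_add_mul_2. destruct b; reflexivity.
  - destruct b; cbn [Nat.b2n];
      [rewrite Nat.add_1_l, Nat.div2_succ_double | rewrite Nat.add_0_l, Nat.div2_double];
      exact IH.
Qed.

Definition code_tail (c : nat) : nat := Nat.div2 (c - 1).
Definition code_drop (i c : nat) : nat := Nat.iter i code_tail c.

Lemma word_code_tail c : word_of_nat (code_tail c) = tl (word_of_nat c).
Proof.
  destruct c; [reflexivity|]. rewrite word_of_nat_S. unfold code_tail. simpl.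
  rewrite Nat.sub_0_r. reflexivity.
Qed.

Lemma word_code_drop i c : word_of_nat (code_drop i c) = skipn i (word_of_nat c).
Proof.
  induction i; [reflexivity|]. unfold code_drop in *. simpl.
  rewrite word_code_tail, IHi. generalize (word_of_nat c). clear.
  induction i; intros [|b l]; simpl; auto.
Qed.

Fixpoint prefixb (v u : list bool) : bool :=
  match v, u with
  | [], _ => true
  | _ :: _, [] => false
  | x :: v', y :: u' => Bool.eqb x y && prefixb v' u'
  end.

Lemma prefixb_spec v u : prefixb v u = true <->
  length v <= length u /\ forall j, j < length v -> nth j v false = nth j u false.
Proof.
  revert u; induction v as [|x v IH]; intros u; simpl.
  - split; auto. intros _; split; [lia | intros; lia].
  - destruct u as [|y u]; simpl; [split; [discriminate | intros [H _]; lia]|].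
    rewrite andb_true_iff, IH. split.
    + intros [E [H1 H2]]. apply Bool.eqb_prop in E. subst y. split; [lia|].
      intros [|j] Hj; auto. apply H2. lia.
    + intros [H1 H2]. split; [|split; [lia|]].
      * specialize (H2 0 ltac:(lia)). simpl in H2. subst. apply eqb_reflx.
      * intros j Hj. apply (H2 (S j)). lia.
Qed.

(** [head_compat x y]: the word coded by [x] is empty, or the word coded
    by [y] is nonempty and has the same first letter. *)
Definition head_compat (x y : nat) : bool :=
  (x =? 0) || (negb (y =? 0) && Bool.eqb (Nat.odd (x - 1)) (Nat.odd (y - 1))).

(** The prefix test read off the codes: a word of length at most [a] is a
    prefix iff the heads are compatible after dropping [i < a] letters. *)
Definition code_prefixb (a b : nat) : bool :=
  all_lt a (fun i => head_compat (code_drop i a) (code_drop i b)).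

Lemma code_prefixb_bounded n : forall a b, length (word_of_nat a) <= n ->
  all_lt n (fun i => head_compat (code_drop i a) (code_drop i b)) =
  prefixb (word_of_nat a) (word_of_nat b).
Proof.
  induction n; intros a b H.
  - destruct (word_of_nat a); [reflexivity | simpl in H; lia].
  - rewrite all_lt_S.
    rewrite (all_lt_ext n _
      (fun i => head_compat (code_drop i (code_tail a)) (code_drop i (code_tail b)))).
    2:{ intros j _. unfold code_drop. rewrite !Nat.iter_succ_r. reflexivity. }
    rewrite IHn by (rewrite word_code_tail; destruct (word_of_nat a); simpl in *; lia).
    rewrite !word_code_tail. cbn [code_drop Nat.iter].
    destruct a as [|a]; [reflexivity|]. destruct b as [|b];
      rewrite ?word_of_nat_S; [reflexivity|].
    unfold head_compat. simpl. rewrite !Nat.sub_0_r. reflexivity.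
Qed.

Lemma code_prefixb_correct a b : code_prefixb a b = prefixb (word_of_nat a) (word_of_nat b).
Proof. apply code_prefixb_bounded, word_of_nat_length. Qed.

Definition e_tail (x : expr) : expr := e_div2 (ESub x (EConst 1)).
Definition e_drop (i c : expr) : expr := ERec i c (e_tail (EVar 1)).
Definition e_head_compat (x y : expr) : expr :=
  e_or (e_not x)
       (e_and (e_not (e_not y))
              (e_eqb (e_odd (ESub x (EConst 1))) (e_odd (ESub y (EConst 1))))).
Definition e_prefixb (x y : expr) : expr :=
  e_prod x (e_head_compat (e_drop (EVar 0) (lift 0 1 x)) (e_drop (EVar 0) (lift 0 1 y))).

Lemma eval_tail p a x : eval p a (e_tail x) = code_tail (eval p a x).
Proof. unfold e_tail. rewrite eval_div2. reflexivity. Qed.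

Lemma eval_drop p a i c : eval p a (e_drop i c) = code_drop (eval p a i) (eval p a c).
Proof.
  simpl. unfold code_drop. induction (eval p a i); simpl; auto. rewrite IHn.
  apply (eval_tail p (n :: _ :: a) (EVar 1)).
Qed.

Lemma eval_head_compat p a x y :
  eval p a (e_head_compat x y) = Nat.b2n (head_compat (eval p a x) (eval p a y)).
Proof.
  apply eval_or; [apply eval_not|]. apply eval_and.
  - apply eval_not_bool, eval_not.
  - apply eval_eqb; apply eval_odd.
Qed.

Lemma eval_prefixb p a x y :
  eval p a (e_prefixb x y) = Nat.b2n (code_prefixb (eval p a x) (eval p a y)).
Proof.
  unfold e_prefixb. rewrite eval_prod. unfold code_prefixb. rewrite <- nprod_b2n.
  apply nprod_ext. intros j _.
  rewrite eval_head_compat, !eval_drop. simpl. rewrite !eval_lift0. reflexivity.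
Qed.

Definition prefix_of (x : cantor) (n : nat) : list bool := map x (seq 0 n).
Definition zero_ext (u : list bool) : cantor := fun j => nth j u false.

Lemma prefix_of_length x n : length (prefix_of x n) = n.
Proof. unfold prefix_of. rewrite length_map, length_seq. auto. Qed.

Lemma nth_prefix_of x n j : j < n -> nth j (prefix_of x n) false = x j.
Proof.
  intros H. unfold prefix_of.
  rewrite nth_indep with (d' := x 0) by (rewrite length_map, length_seq; auto).
  rewrite map_nth, seq_nth; auto.
Qed.

Lemma prefix_of_is_prefix x n : is_prefix (prefix_of x n) x.
Proof. intros j Hj. rewrite prefix_of_length in Hj. apply nth_prefix_of; auto. Qed.

Lemma is_prefix_prefixb v x n :
  length v <= n -> (is_prefix v x <-> prefixb v (prefix_of x n) = true).
Proof.
  intros H. rewrite prefixb_spec, prefix_of_length. unfold is_prefix. split.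
  - intros H1. split; auto. intros j Hj. rewrite nth_prefix_of by lia. auto.
  - intros [_ H1] j Hj. rewrite H1 by auto. apply nth_prefix_of. lia.
Qed.

Lemma prefixb_zero_ext v u :
  prefixb v u = true <-> (length v <= length u /\ is_prefix v (zero_ext u)).
Proof. rewrite prefixb_spec. unfold is_prefix, zero_ext. tauto. Qed.

Lemma prefixb_is_prefix v u x : prefixb v u = true -> is_prefix u x -> is_prefix v x.
Proof. rewrite prefixb_spec. intros [H1 H2] H3 j Hj. rewrite H2 by auto. apply H3. lia. Qed.

Lemma is_prefix_zeros_app j l x : is_prefix (repeat false j ++ l) x <->
  (forall t, t < j -> x t = false) /\ (forall t, t < length l -> x (j + t) = nth t l false).
Proof.
  unfold is_prefix. rewrite length_app, repeat_length. split.
  - intros H. split.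
    + intros t Ht. rewrite <- H by lia. rewrite app_nth1 by (rewrite repeat_length; lia).
      apply nth_repeat.
    + intros t Ht. rewrite <- H by lia. rewrite app_nth2 by (rewrite repeat_length; lia).
      rewrite repeat_length. f_equal. lia.
  - intros [H1 H2] t Ht. destruct (Nat.lt_ge_cases t j).
    + rewrite app_nth1 by (rewrite repeat_length; lia). rewrite nth_repeat, H1; auto.
    + rewrite app_nth2 by (rewrite repeat_length; lia). rewrite repeat_length.
      rewrite <- H2 by lia. f_equal. lia.
Qed.

(** ** Compactness of cylinders (König's lemma) *)

Section Konig.
Variable P : list bool -> Prop.
Variable u0 : list bool.

Fixpoint greedy_path (n : nat) : list bool :=
  match n with
  | 0 => u0
  | S n =>
      if excluded_middle_informative (P (greedy_path n ++ [false]))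
      then greedy_path n ++ [false] else greedy_path n ++ [true]
  end.

Lemma greedy_path_length n : length (greedy_path n) = length u0 + n.
Proof.
  induction n; simpl; [lia|].
  destruct excluded_middle_informative; rewrite length_app; simpl; lia.
Qed.

Lemma greedy_path_extends n m : exists t, greedy_path (n + m) = greedy_path n ++ t.
Proof.
  induction m as [|m [t Ht]]; [exists []; rewrite Nat.add_0_r, app_nil_r; auto|].
  replace (n + S m) with (S (n + m)) by lia. simpl.
  destruct excluded_middle_informative; rewrite Ht, <- app_assoc; eexists; eauto.
Qed.

Lemma greedy_path_nth n m j :
  j < length (greedy_path n) -> j < length (greedy_path m) ->
  nth j (greedy_path n) false = nth j (greedy_path m) false.
Proof.
  intros H1 H2. destruct (Nat.le_ge_cases n m).
  - destruct (greedy_path_extends n (m - n)) as [t Ht].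
    replace (n + (m - n)) with m in Ht by lia. rewrite Ht, app_nth1; auto.
  - destruct (greedy_path_extends m (n - m)) as [t Ht].
    replace (m + (n - m)) with n in Ht by lia. rewrite Ht, app_nth1; auto.
Qed.

Lemma konig : P u0 -> (forall u, P u -> P (u ++ [false]) \/ P (u ++ [true])) ->
  exists x, is_prefix u0 x /\ forall n, length u0 <= n -> P (prefix_of x n).
Proof.
  intros H0 Hs.
  assert (HP : forall n, P (greedy_path n)).
  { induction n; simpl; auto. destruct excluded_middle_informative; auto.
    destruct (Hs _ IHn); tauto. }
  set (x := fun j => nth j (greedy_path (S j)) false).
  assert (Hx : forall n, prefix_of x (length u0 + n) = greedy_path n).
  { intros n. apply nth_ext with (d := false) (d' := false).
    - rewrite prefix_of_length, greedy_path_length; auto.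
    - intros j Hj. rewrite prefix_of_length in Hj. rewrite nth_prefix_of by auto.
      apply greedy_path_nth; rewrite greedy_path_length; lia. }
  exists x. split.
  - specialize (Hx 0). rewrite Nat.add_0_r in Hx. simpl in Hx. rewrite <- Hx.
    apply prefix_of_is_prefix.
  - intros n Hn. replace n with (length u0 + (n - length u0)) by lia. rewrite Hx. auto.
Qed.
End Konig.

Definition covered_by (d : nat -> option (list bool)) (N : nat) (x : cantor) : Prop :=
  exists i v, i < N /\ d i = Some v /\ is_prefix v x.

Lemma covered_by_mono d N M x : N <= M -> covered_by d N x -> covered_by d M x.
Proof. intros H [i [v [H1 [H2 H3]]]]. exists i, v. split; auto. lia. Qed.

Definition uncoverable (d : nat -> option (list bool)) (w : list bool) : Prop :=
  forall N, exists x, is_prefix w x /\ ~ covered_by d N x.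

(** An uncoverable cylinder has an uncoverable child: otherwise both children
    are covered at some finite stage, hence the parent is too. *)
Lemma uncoverable_split d u :
  uncoverable d u -> uncoverable d (u ++ [false]) \/ uncoverable d (u ++ [true]).
Proof.
  intros Hu. apply NNPP. intros Hc. apply not_or_and in Hc. destruct Hc as [H0 H1].
  apply not_all_ex_not in H0 as [N0 H0]. apply not_all_ex_not in H1 as [N1 H1].
  destruct (Hu (Nat.max N0 N1)) as [x [Hx Hnc]]. apply Hnc.
  assert (Hb : forall b, x (length u) = b -> is_prefix (u ++ [b]) x).
  { intros b Hb j Hj. rewrite length_app in Hj. simpl in Hj.
    destruct (Nat.lt_ge_cases j (length u)).
    - rewrite app_nth1 by auto. apply Hx; auto.
    - replace j with (length u) by lia. rewrite app_nth2, Nat.sub_diag by lia. auto. }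
  destruct (x (length u)) eqn:E.
  - apply (covered_by_mono d N1); [lia|]. apply NNPP. intro Hn. apply H1. eauto.
  - apply (covered_by_mono d N0); [lia|]. apply NNPP. intro Hn. apply H0. eauto.
Qed.

Lemma cylinder_compact (d : nat -> option (list bool)) w :
  (forall x, is_prefix w x -> exists i v, d i = Some v /\ is_prefix v x) ->
  exists N, forall x, is_prefix w x -> covered_by d N x.
Proof.
  intros Hcov. apply NNPP. intros Hn.
  assert (Hw : uncoverable d w).
  { intros N. apply NNPP. intros Hc. apply Hn. exists N. intros x Hx.
    apply NNPP. intros Hc2. apply Hc. exists x; auto. }
  destruct (konig (uncoverable d) w Hw (uncoverable_split d)) as [x [Hx HPx]].
  destruct (Hcov x Hx) as [i [v [Hd Hv]]].
  destruct (HPx (Nat.max (length v) (length w)) ltac:(lia) (S i)) as [y [Hy Hnc]].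
  apply Hnc. exists i, v. split; [lia|]. split; auto.
  eapply prefixb_is_prefix; [|exact Hy]. apply is_prefix_prefixb; auto. lia.
Qed.

Fixpoint all_words (D : nat) : list (list bool) :=
  match D with
  | 0 => [[]]
  | S D => flat_map (fun u => [false :: u; true :: u]) (all_words D)
  end.

Definition sumlist (l : list nat) : nat := fold_right plus 0 l.

Definition count_words (g : list bool -> bool) (l : list (list bool)) : nat :=
  sumlist (map (fun u => Nat.b2n (g u)) l).

Lemma pow2_pos D : 1 <= 2 ^ D.
Proof. induction D; simpl; lia. Qed.

Lemma sumlist_ext (f g : list bool -> nat) l :
  (forall u, In u l -> f u = g u) -> sumlist (map f l) = sumlist (map g l).
Proof. induction l; simpl; intros H; auto. Qed.

Lemma sumlist_const c (l : list (list bool)) : sumlist (map (fun _ => c) l) = c * length l.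
Proof. induction l; simpl; auto. rewrite IHl. lia. Qed.

Lemma sumlist_children h l :
  sumlist (map h (flat_map (fun u => [false :: u; true :: u]) l)) =
  sumlist (map (fun u => h (false :: u) + h (true :: u)) l).
Proof. induction l; simpl; auto. rewrite IHl. lia. Qed.

(** The codes [2^D - 1 + j], [j < 2^D], enumerate the words of length [D],
    so sums over [all_words D] are computable. *)
Lemma sum_over_codes D : forall h,
  nsum (2 ^ D) (fun j => h (word_of_nat (2 ^ D - 1 + j))) = sumlist (map h (all_words D)).
Proof.
  induction D; intros h; [cbn; lia|].
  change (2 ^ S D) with (2 * 2 ^ D). rewrite nsum_double. simpl all_words.
  rewrite sumlist_children, <- IHD. apply nsum_ext. intros j _. pose proof (pow2_pos D).
  replace (2 * 2 ^ D - 1 + 2 * j) with (S (2 * (2 ^ D - 1 + j))) by lia.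
  replace (2 * 2 ^ D - 1 + S (2 * j)) with (S (S (2 * (2 ^ D - 1 + j)))) by lia.
  rewrite !word_of_nat_S, Nat.odd_succ, Nat.even_mul, Nat.odd_mul.
  cbn [Nat.odd Nat.even]. rewrite ?andb_false_l, ?orb_true_l.
  rewrite Nat.div2_double, Nat.div2_succ_double. reflexivity.
Qed.

Lemma all_words_length D u : In u (all_words D) -> length u = D.
Proof.
  revert u; induction D; simpl; intros u H; [destruct H as [<-|[]]; reflexivity|].
  apply in_flat_map in H. destruct H as [v [Hv H]].
  destruct H as [<-|[<-|[]]]; simpl; f_equal; auto.
Qed.

Lemma in_all_words D u : length u = D -> In u (all_words D).
Proof.
  revert u; induction D; intros u H; [destruct u; [left; auto | discriminate]|].
  destruct u as [|b u]; [discriminate|]. simpl in H. simpl. apply in_flat_map.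
  exists u. split; [apply IHD; lia | destruct b; simpl; auto].
Qed.

Lemma all_words_count D : length (all_words D) = 2 ^ D.
Proof.
  induction D; simpl; auto. rewrite <- IHD. clear IHD.
  induction (all_words D); simpl; auto. lia.
Qed.

Lemma count_extensions D : forall v, count_words (prefixb v) (all_words D) =
  if length v <=? D then 2 ^ (D - length v) else 0.
Proof.
  unfold count_words. induction D; intros v; [destruct v; reflexivity|].
  simpl all_words. rewrite sumlist_children. destruct v as [|x v].
  - simpl. rewrite (sumlist_const 2), all_words_count. lia.
  - rewrite (sumlist_ext _ (fun u => Nat.b2n (prefixb v u))).
    + rewrite IHD. simpl length. destruct (length v <=? D) eqn:E; simpl; rewrite E; reflexivity.
    + intros u _. destruct x; simpl; destruct (prefixb v u); reflexivity.
Qed.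

Lemma count_union_bound (l : list (list bool)) (g : list bool -> bool)
    (h : nat -> list bool -> bool) N :
  (forall u, In u l -> g u = true -> exists i, i < N /\ h i u = true) ->
  count_words g l <= nsum N (fun i => count_words (h i) l).
Proof.
  unfold count_words. induction l as [|a l IH]; intros H; simpl; [lia|].
  rewrite nsum_add. specialize (IH (fun u Hu => H u (or_intror Hu))).
  assert (Nat.b2n (g a) <= nsum N (fun i => Nat.b2n (h i a))); [|lia].
  destruct (g a) eqn:E; simpl; [|lia].
  destruct (H a (or_introl eq_refl) E) as [i [Hi Hh]].
  pose proof (nsum_le_term N (fun i => Nat.b2n (h i a)) i Hi) as Hle.
  simpl in Hle. rewrite Hh in Hle. simpl in Hle. lia.
Qed.

Fixpoint max_len (c : nat -> option (list bool)) (N : nat) : nat :=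
  match N with
  | 0 => 0
  | S N => Nat.max (max_len c N) (match c N with Some v => length v | None => 0 end)
  end.

Lemma max_len_spec c N i v : i < N -> c i = Some v -> length v <= max_len c N.
Proof.
  induction N; simpl; intros H1 H2; [lia|].
  destruct (Nat.eq_dec i N); [subst; rewrite H2; lia|].
  specialize (IHN ltac:(lia) H2). lia.
Qed.

Section MeasureBounds.
Local Open Scope R_scope.

Lemma INR_pow2 n : INR (2 ^ n) = 2 ^ n.
Proof. rewrite pow_INR. reflexivity. Qed.

Lemma pow2_posR n : 0 < 2 ^ n.
Proof. apply pow_lt. lra. Qed.

Lemma pow2_split D l : (l <= D)%nat -> 2 ^ D = 2 ^ (D - l) * 2 ^ l.
Proof. intros H. rewrite <- pow_add. f_equal. lia. Qed.

Lemma count_extensions_R w D : (length w <= D)%nat ->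
  INR (count_words (prefixb w) (all_words D)) = 2 ^ (D - length w).
Proof.
  intros H. rewrite count_extensions. replace (length w <=? D)%nat with true
    by (symmetry; apply Nat.leb_le; auto). apply INR_pow2.
Qed.

Lemma count_le_cover_weight (c : nat -> option (list bool)) N D (g : list bool -> bool) :
  (forall i v, (i < N)%nat -> c i = Some v -> (length v <= D)%nat) ->
  (forall u, In u (all_words D) -> g u = true ->
     exists i v, (i < N)%nat /\ c i = Some v /\ prefixb v u = true) ->
  INR (count_words g (all_words D)) <= 2 ^ D * psum c N.
Proof.
  intros Hlen Hcov.
  set (hc := fun i u => match c i with Some v => prefixb v u | None => false end).
  eapply Rle_trans; [apply le_INR, (count_union_bound _ g hc N)|].
  { intros u Hu Hg. destruct (Hcov u Hu Hg) as [i [v [Hi [Hc Hp]]]].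
    exists i. unfold hc. rewrite Hc. auto. }
  clear Hcov. induction N; simpl; [lra|].
  rewrite plus_INR, Rmult_plus_distr_l.
  apply Rplus_le_compat; [apply IHN; intros i v Hi; apply Hlen; lia|].
  unfold hc. destruct (c N) as [w|] eqn:E; simpl cyl_weight.
  - specialize (Hlen N w ltac:(lia) E).
    rewrite count_extensions_R, (pow2_split D (length w)), Rmult_assoc, Rinv_r by
      (auto || apply Rgt_not_eq, pow2_posR).
    lra.
  - unfold count_words. rewrite (sumlist_const 0). simpl. lra.
Qed.

Lemma mu_ge_mono (S1 S2 : cantor -> Prop) r :
  (forall x, S1 x -> S2 x) -> mu_ge S1 r -> mu_ge S2 r.
Proof. intros H H1 c Hc. apply H1. intros x Hx. apply Hc, H, Hx. Qed.

(** A set containing the cylinder [w] has outer measure at least [2^-|w|]: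
    a cover has a finite subcover by compactness, whose weight is bounded by
    counting the [2^(D - |w|)] extensions of [w] of a large length [D]. *)
Lemma mu_ge_cylinder (S : cantor -> Prop) w :
  (forall x, is_prefix w x -> S x) -> mu_ge S (/ 2 ^ length w).
Proof.
  intros HS c Hc r' Hr'.
  destruct (cylinder_compact c w) as [N HN].
  { intros x Hx. destruct (Hc x (HS x Hx)) as [i [v [H1 H2]]]. eauto. }
  set (D := Nat.max (length w) (max_len c N)).
  assert (Hcount := count_le_cover_weight c N D (prefixb w)).
  rewrite count_extensions_R in Hcount by (unfold D; lia).
  assert (Hb : 2 ^ (D - length w) <= 2 ^ D * psum c N).
  { apply Hcount.
    - intros i v Hi Hv. pose proof (max_len_spec c N i v Hi Hv). unfold D. lia.
    - intros u Hu Hw. apply all_words_length in Hu.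
      apply prefixb_zero_ext in Hw. destruct Hw as [_ Hw].
      destruct (HN _ Hw) as [i [v [Hi [Hv Hp]]]]. exists i, v. do 2 (split; auto).
      apply prefixb_zero_ext. split; auto.
      rewrite Hu. pose proof (max_len_spec c N i v Hi Hv). unfold D. lia. }
  exists N. rewrite (pow2_split D (length w)) in Hb by (unfold D; lia).
  pose proof (pow2_posR (D - length w)). pose proof (pow2_posR (length w)).
  assert (/ 2 ^ length w <= psum c N); [|lra].
  apply Rmult_le_reg_l with (2 ^ (D - length w) * 2 ^ length w); [nra|].
  rewrite Rmult_assoc, Rinv_r, Rmult_1_r; lra.
Qed.

End MeasureBounds.

(** ** The reduction of C_N to LDL *)

Definition closed_named (q : baire) (x : cantor) : Prop :=
  forall i m, q i = S m -> ~ is_prefix (word_of_nat m) x.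

Lemma word_zeros_app j c : word_of_nat (S c * 2 ^ j - 1) = repeat false j ++ word_of_nat c.
Proof.
  induction j; [simpl; rewrite Nat.mul_1_r, Nat.sub_0_r; reflexivity|].
  pose proof (pow2_pos j). pose proof (Nat.mul_le_mono_l 1 (2 ^ j) (S c) H).
  replace (S c * 2 ^ S j - 1) with (S (2 * (S c * 2 ^ j - 1))) by (simpl; lia).
  rewrite word_of_nat_double, IHj. reflexivity.
Qed.

Definition B_set (p : baire) (x : cantor) : Prop :=
  (forall j, ~ is_prefix (repeat false j ++ [true; true]) x) /\
  (forall j m, p j = S m -> ~ is_prefix (repeat false m ++ [true]) x).

(** A name of [(B_p, 2)]: odd positions carry [k = 2]; position [4j] lists
    the code of [0^j11] (plus one), position [4j+2] the code of [0^m1] when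
    [p j = m + 1]. *)
Definition B_name (p : baire) (n : nat) : nat :=
  if Nat.odd n then 2 else
  if Nat.odd (Nat.div2 n) then
    (match p (Nat.div2 (Nat.div2 n)) with 0 => 0 | S m => 3 * 2 ^ m end)
  else 7 * 2 ^ Nat.div2 (Nat.div2 n).

Definition e_B_name : expr :=
  let oracle_value := EOracle (e_div2 (e_div2 (EVar 0))) in
  e_if (e_odd (EVar 0)) (EConst 2)
    (e_if (e_odd (e_div2 (EVar 0)))
       (e_if (e_not oracle_value) (EConst 0)
             (EMul (EConst 3) (e_pow2 (ESub oracle_value (EConst 1)))))
       (EMul (EConst 7) (e_pow2 (e_div2 (e_div2 (EVar 0)))))).

Lemma eval_B_name p n : eval p [n] e_B_name = B_name p n.
Proof.
  unfold e_B_name, B_name.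
  rewrite (eval_if _ _ _ _ _ (Nat.odd n)) by apply eval_odd.
  destruct (Nat.odd n); [reflexivity|].
  rewrite (eval_if _ _ _ _ _ (Nat.odd (Nat.div2 n)))
    by (rewrite eval_odd, eval_div2; reflexivity).
  destruct (Nat.odd (Nat.div2 n)).
  - rewrite (eval_if _ _ _ _ _ (p (Nat.div2 (Nat.div2 n)) =? 0))
      by (rewrite eval_not; cbn [eval]; rewrite !eval_div2; reflexivity).
    cbn [eval]. rewrite eval_pow2. cbn [eval]. rewrite !eval_div2. cbn [eval nth].
    destruct (p (Nat.div2 (Nat.div2 n))); simpl; [reflexivity | rewrite Nat.sub_0_r; lia].
  - cbn [eval]. rewrite eval_pow2, !eval_div2. reflexivity.
Qed.

Lemma B_name_even p j : B_name p (2 * (2 * j)) = 7 * 2 ^ j.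
Proof.
  unfold B_name. rewrite Nat.odd_mul, Nat.div2_double, Nat.odd_mul, Nat.div2_double.
  reflexivity.
Qed.

Lemma B_name_odd p j :
  B_name p (2 * (2 * j + 1)) = match p j with 0 => 0 | S m => 3 * 2 ^ m end.
Proof.
  unfold B_name. rewrite Nat.odd_mul, Nat.div2_double. simpl andb.
  replace (2 * j + 1) with (S (2 * j)) by lia.
  rewrite Nat.odd_succ, Nat.even_mul, Nat.div2_succ_double. reflexivity.
Qed.

Lemma B_name_names p x : closed_named (fun i => B_name p (2 * i)) x <-> B_set p x.
Proof.
  assert (E7 : forall j, word_of_nat (7 * 2 ^ j - 1) = repeat false j ++ [true; true])
    by (intro j; apply (word_zeros_app j 6)).
  assert (E3 : forall j, word_of_nat (3 * 2 ^ j - 1) = repeat false j ++ [true])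
    by (intro j; apply (word_zeros_app j 2)).
  unfold closed_named. split.
  - intros H. split.
    + intros j. rewrite <- E7. apply (H (2 * j)).
      rewrite B_name_even. pose proof (pow2_pos j). lia.
    + intros j m Hp. rewrite <- E3. apply (H (2 * j + 1)).
      rewrite B_name_odd, Hp. pose proof (pow2_pos m). lia.
  - intros [H1 H2] i m Hq. destruct (Nat.Even_or_Odd i) as [[j ->]|[j ->]].
    + rewrite B_name_even in Hq. replace m with (7 * 2 ^ j - 1) by lia. rewrite E7. apply H1.
    + rewrite B_name_odd in Hq. destruct (p j) as [|m'] eqn:E; [discriminate|].
      replace m with (3 * 2 ^ m' - 1) by lia. rewrite E3. apply (H2 j); auto.
Qed.

(** If [n] is in [A], the cylinder [0^n10] lies inside [B_p]. *)
Lemma B_set_pos p n : (~ exists i, p i = S n) -> mu_pos (B_set p).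
Proof.
  intros Hn. exists (/ 2 ^ length (repeat false n ++ [true; false]))%R.
  split; [apply Rinv_0_lt_compat, pow2_posR|].
  apply mu_ge_cylinder. intros x Hx. apply is_prefix_zeros_app in Hx. destruct Hx as [H1 H2].
  assert (Hn0 : x n = true) by (rewrite <- (Nat.add_0_r n); apply (H2 0); simpl; lia).
  assert (Hn1 : x (S n) = false) by (rewrite <- Nat.add_1_r; apply (H2 1); simpl; lia).
  split.
  - intros j Hj. apply is_prefix_zeros_app in Hj. destruct Hj as [J1 J2].
    assert (Jj : x j = true) by (rewrite <- (Nat.add_0_r j); apply (J2 0); simpl; lia).
    assert (Jj1 : x (S j) = true) by (rewrite <- Nat.add_1_r; apply (J2 1); simpl; lia).
    destruct (lt_eq_lt_dec j n) as [[Hl|He]|Hg].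
    + rewrite H1 in Jj by auto. discriminate.
    + subst. congruence.
    + rewrite J1 in Hn0 by auto. discriminate.
  - intros j m Hp Hm. apply is_prefix_zeros_app in Hm. destruct Hm as [J1 J2].
    assert (Jm : x m = true) by (rewrite <- (Nat.add_0_r m); apply (J2 0); simpl; lia).
    destruct (lt_eq_lt_dec m n) as [[Hl|He]|Hg].
    + rewrite H1 in Jm by auto. discriminate.
    + subst. apply Hn. eauto.
    + rewrite J1 in Hn0 by auto. discriminate.
Qed.

Definition starts_with_zero (y : nat) : bool := negb (y =? 0) && negb (Nat.odd (y - 1)).

Lemma starts_with_zero_word y :
  starts_with_zero y = match word_of_nat y with false :: _ => true | _ => false end.
Proof.
  destruct y; [reflexivity|]. rewrite word_of_nat_S. unfold starts_with_zero. simpl.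
  rewrite Nat.sub_0_r. destruct (Nat.odd y); reflexivity.
Qed.

(** [leading_zeros c] counts the [j < c] such that the first [j + 1] letters
    of the word coded by [c] are zeros. *)
Definition leading_zeros (c : nat) : nat :=
  nsum c (fun j => Nat.b2n (all_lt (S j) (fun i => starts_with_zero (code_drop i c)))).

Lemma skipn_zeros_app i n (v : list bool) :
  i <= n -> skipn i (repeat false n ++ v) = repeat false (n - i) ++ v.
Proof.
  revert n; induction i; intros n H; [rewrite Nat.sub_0_r; reflexivity|].
  destruct n; [lia|]. apply IHi. lia.
Qed.

Lemma leading_zeros_correct c n v :
  word_of_nat c = repeat false n ++ true :: v -> leading_zeros c = n.
Proof.
  intros Hw. unfold leading_zeros.
  assert (Hn : n < c).
  { pose proof (word_of_nat_length c) as H.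
    rewrite Hw, length_app, repeat_length in H. simpl in H. lia. }
  rewrite (nsum_ext _ _ (fun j => Nat.b2n (j <? n))); [apply nsum_below; lia|].
  intros j Hj. f_equal. destruct (Nat.ltb_spec j n).
  - apply all_lt_true. intros i Hi.
    rewrite starts_with_zero_word, word_code_drop, Hw, skipn_zeros_app by lia.
    destruct (n - i) eqn:E; [lia | reflexivity].
  - apply not_true_iff_false. rewrite all_lt_true. intros H1. specialize (H1 n ltac:(lia)).
    rewrite starts_with_zero_word, word_code_drop, Hw, skipn_zeros_app, Nat.sub_diag
      in H1 by lia.
    discriminate.
Qed.

Definition e_starts_with_zero (y : expr) : expr :=
  e_and (e_not (e_not y)) (e_not (e_odd (ESub y (EConst 1)))).

Definition e_leading_zeros : expr :=
  e_sum (EOracle (EConst 0))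
        (e_prod (ESucc (EVar 0))
                (e_starts_with_zero (e_drop (EVar 0) (EOracle (EConst 0))))).

Lemma eval_leading_zeros p a : eval p a e_leading_zeros = leading_zeros (p 0).
Proof.
  unfold e_leading_zeros, leading_zeros. rewrite eval_sum. apply nsum_ext. intros j _.
  rewrite eval_prod, <- nprod_b2n. apply nprod_ext. intros i _.
  assert (Hd : eval p (i :: j :: a) (e_drop (EVar 0) (EOracle (EConst 0)))
               = code_drop i (p 0)) by (rewrite eval_drop; reflexivity).
  unfold e_starts_with_zero, starts_with_zero. apply eval_and.
  - apply eval_not_bool. rewrite eval_not, Hd. reflexivity.
  - apply eval_not_bool. rewrite eval_odd. cbn [eval]. rewrite Hd. reflexivity.
Qed.

Lemma word_cases (w : list bool) :
  (exists n v, w = repeat false n ++ true :: v) \/ w = repeat false (length w).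
Proof.
  induction w as [|[] w IH]; [right; reflexivity | left; exists 0, w; reflexivity|].
  destruct IH as [[n [v ->]]|E]; [left; exists (S n), v; reflexivity|].
  right. simpl. rewrite <- E. reflexivity.
Qed.

Lemma first_one (x : cantor) t :
  x t = true -> exists n, x n = true /\ forall s, s < n -> x s = false.
Proof.
  induction t as [t IH] using lt_wf_ind. intros Ht.
  destruct (classic (exists s, s < t /\ x s = true)) as [[s [Hs Hxs]]|Hno].
  - apply (IH s Hs Hxs).
  - exists t. split; auto. intros s Hs. destruct (x s) eqn:E; auto.
    exfalso. apply Hno. eauto.
Qed.

(** The cylinders [0^(m+3)] and [0^(m+i)10] ([i >= 0]) cover [B_p] inside
    [0^m], since [B_p] avoids every [0^j11]. *)
Definition zero_block_cover (m i : nat) : option (list bool) :=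
  match i with
  | 0 => Some (repeat false (m + 3))
  | S i => Some (repeat false (m + i) ++ [true; false])
  end.

Lemma zero_block_cover_covers p m :
  covers (zero_block_cover m) (fun x => B_set p x /\ is_prefix (repeat false m) x).
Proof.
  intros x [[HB _] Hx].
  assert (Hx' : forall t, t < m -> x t = false).
  { intros t Ht. rewrite <- (Hx t) by (rewrite repeat_length; auto). apply nth_repeat. }
  destruct (classic (exists t, x t = true)) as [[t Ht]|Hall].
  - destruct (first_one x t Ht) as [n [Hn Hl]].
    assert (Hm : m <= n).
    { destruct (Nat.lt_ge_cases n m); auto. rewrite Hx' in Hn by auto. discriminate. }
    assert (Hsn : forall b, x (S n) = b ->
              is_prefix (repeat false n ++ [true; b]) x).
    { intros b Hb. apply is_prefix_zeros_app. split; auto.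
      intros [|[|t']] Ht'; simpl in *; try lia; [rewrite Nat.add_0_r | rewrite Nat.add_1_r];
        auto. }
    destruct (x (S n)) eqn:E; [exfalso; apply (HB n), Hsn; auto|].
    exists (S (n - m)), (repeat false n ++ [true; false]). split; [|apply Hsn; auto].
    simpl. do 3 f_equal. lia.
  - exists 0, (repeat false (m + 3)). split; [reflexivity|].
    intros j Hj. rewrite nth_repeat. destruct (x j) eqn:E; auto. exfalso; apply Hall; eauto.
Qed.

Section CNtoLDL.
Local Open Scope R_scope.

Lemma half_sum k : / 2 ^ S k + / 2 ^ S k = / 2 ^ k.
Proof. simpl. pose proof (pow2_posR k). field. lra. Qed.

(** The cover [zero_block_cover m] has total weight [2^-(m+3) + 2^-(m+1) = 5/8 2^-m]. *)
Lemma zero_block_cover_weight m N :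
  psum (zero_block_cover m) (S N) + / 2 ^ (m + 1 + N) = / 2 ^ (m + 3) + / 2 ^ (m + 1).
Proof.
  induction N.
  - simpl psum. simpl cyl_weight. rewrite repeat_length, Nat.add_0_r. lra.
  - change (psum (zero_block_cover m) (S (S N)))
      with (psum (zero_block_cover m) (S N) + cyl_weight (zero_block_cover m (S N))).
    simpl cyl_weight. rewrite length_app, repeat_length. simpl length.
    replace (m + N + 2)%nat with (S (m + 1 + N)) by lia.
    replace (m + 1 + S N)%nat with (S (m + 1 + N)) by lia.
    rewrite <- IHN, <- (half_sum (m + 1 + N)). lra.
Qed.

(** Inside [0^m] the set [B_p] has density at most [5/8 < 3/4]. *)
Lemma B_zero_block_sparse p m :
  ~ mu_ge (fun x => B_set p x /\ is_prefix (repeat false m) x) ((1 - / 2 ^ 2) * / 2 ^ m).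
Proof.
  intros Hmu. pose proof (pow2_posR m) as Hm.
  assert (Hinv : 0 < / 2 ^ m) by (apply Rinv_0_lt_compat; lra).
  assert (Hw : / 2 ^ (m + 3) + / 2 ^ (m + 1) = 5 / 8 * / 2 ^ m)
    by (rewrite !pow_add; simpl; field; lra).
  destruct (Hmu _ (zero_block_cover_covers p m) (5 / 8 * / 2 ^ m)) as [[|N] HN];
    [simpl; nra | simpl in HN; nra |].
  pose proof (zero_block_cover_weight m N).
  assert (0 < / 2 ^ (m + 1 + N)) by apply Rinv_0_lt_compat, pow2_posR. lra.
Qed.

Lemma B_one_prefix_empty p n v x :
  (exists i, p i = S n) -> B_set p x -> ~ is_prefix (repeat false n ++ true :: v) x.
Proof.
  intros [i Hi] [_ HB] Hx. apply (HB i n Hi).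
  apply is_prefix_zeros_app in Hx. apply is_prefix_zeros_app. destruct Hx as [H1 H2].
  split; auto. intros t Ht. simpl in Ht. replace t with 0%nat by lia. apply (H2 0%nat).
  simpl. lia.
Qed.

Lemma psum_none N : psum (fun _ => None) N = 0.
Proof. induction N; simpl; auto. rewrite IHN. simpl. lra. Qed.

(** Correctness of the output: a word of [B_p]-density [>= 3/4] is not all
    zeros, and its number of leading zeros lies in [A]. *)
Lemma B_dense_word p c :
  mu_ge (fun x => B_set p x /\ is_prefix (word_of_nat c) x)
        ((1 - / 2 ^ 2) * / 2 ^ length (word_of_nat c)) ->
  ~ exists i, p i = S (leading_zeros c).
Proof.
  intros Hmu. pose proof (pow2_posR (length (word_of_nat c))).
  assert (Hpos : 0 < / 2 ^ length (word_of_nat c)) by (apply Rinv_0_lt_compat; lra).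
  destruct (word_cases (word_of_nat c)) as [[n [v Hw]]|Hw].
  - rewrite (leading_zeros_correct c n v Hw). intros Hn.
    destruct (Hmu (fun _ => None)) with (r' := 0) as [N HN].
    + intros x [HB Hx]. rewrite Hw in Hx. exfalso. exact (B_one_prefix_empty p n v x Hn HB Hx).
    + simpl. lra.
    + rewrite psum_none in HN. lra.
  - exfalso. apply (B_zero_block_sparse p (length (word_of_nat c))). rewrite <- Hw. exact Hmu.
Qed.

End CNtoLDL.

Theorem C_N_le_LDL : sW_le C_N LDL.
Proof.
  apply sW_le_by_programs with (eK := e_B_name) (eH := e_leading_zeros).
  intros p A HpA [n Hn]. simpl in HpA. injection HpA as <-.
  set (B := closed_named (fun i => run e_B_name p (2 * i))).
  assert (HB : forall x, B x <-> B_set p x).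
  { intros x. rewrite <- B_name_names. unfold B, closed_named, run.
    split; intros H i m; [rewrite <- eval_B_name | rewrite eval_B_name]; apply H. }
  exists (B, 2). simpl. split; [reflexivity|]. split.
  - destruct (B_set_pos p n Hn) as [r [Hr Hmu]]. exists r. split; auto.
    apply (mu_ge_mono (B_set p)); [apply HB | exact Hmu].
  - intros r y Hy Hdense. injection Hy as <-. simpl in Hdense.
    exists (leading_zeros (r 0)). unfold run. rewrite eval_leading_zeros. split; auto.
    apply B_dense_word.
    apply (mu_ge_mono _ _ _ (fun x H => conj (proj1 (HB x) (proj1 H)) (proj2 H)) Hdense).
Qed.

(** ** The reduction of LDL to C_N: the rejection test *)

Definition forbidden (q : baire) (i : nat) (u : list bool) : bool :=
  negb (q i =? 0) && prefixb (word_of_nat (q i - 1)) u.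

Definition survives (q : baire) (w : list bool) (s : nat) (u : list bool) : bool :=
  prefixb w u && all_lt s (fun i => negb (forbidden q i u)).

(** The word coded by [c] is rejected at stage [s] when less than a
    [1 - 2^-k] fraction of its extensions of length [s] survive. *)
Definition rejected (q : baire) (k c s : nat) : bool :=
  count_words (survives q (word_of_nat c) s) (all_words s) * 2 ^ k <?
  (2 ^ k - 1) * count_words (prefixb (word_of_nat c)) (all_words s).

(** Under a binder [j], the code [2^s - 1 + j] of the [j]-th word of length [s]. *)
Definition e_word_code (sx : expr) : expr :=
  EAdd (ESub (e_pow2 (lift 0 1 sx)) (EConst 1)) (EVar 0).

(** The closed set is read from the even positions of the oracle. *)
Definition e_closed_name (i : expr) : expr := EOracle (EMul (EConst 2) i).

Definition e_forbidden (i u : expr) : expr :=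
  e_and (e_not (e_not (e_closed_name i)))
        (e_prefixb (ESub (e_closed_name i) (EConst 1)) u).

Definition e_survives (c s u : expr) : expr :=
  e_and (e_prefixb c u) (e_prod s (e_not (e_forbidden (EVar 0) (lift 0 1 u)))).

Definition e_count_survivors (cx sx : expr) : expr :=
  e_sum (e_pow2 sx) (e_survives (lift 0 1 cx) (lift 0 1 sx) (e_word_code sx)).

Definition e_count_extensions (cx sx : expr) : expr :=
  e_sum (e_pow2 sx) (e_prefixb (lift 0 1 cx) (e_word_code sx)).

(** The parameter [k] is read from position 1 of the oracle. *)
Definition e_rejected (cx sx : expr) : expr :=
  let two_k := e_pow2 (EOracle (EConst 1)) in
  e_ltb (EMul (e_count_survivors cx sx) two_k)
        (EMul (ESub two_k (EConst 1)) (e_count_extensions cx sx)).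

Lemma eval_word_code p a j sx :
  eval p (j :: a) (e_word_code sx) = 2 ^ eval p a sx - 1 + j.
Proof. unfold e_word_code. cbn [eval]. rewrite eval_pow2, eval_lift0. reflexivity. Qed.

Lemma eval_survives p b c s u :
  eval p b (e_survives c s u) =
  Nat.b2n (survives (fun i => p (2 * i)) (word_of_nat (eval p b c)) (eval p b s)
                    (word_of_nat (eval p b u))).
Proof.
  apply eval_and; [rewrite eval_prefixb, code_prefixb_correct; reflexivity|].
  rewrite eval_prod, <- nprod_b2n. apply nprod_ext. intros i _.
  apply eval_not_bool. apply eval_and.
  - apply eval_not_bool. rewrite eval_not. reflexivity.
  - rewrite eval_prefixb, code_prefixb_correct, eval_lift0. reflexivity.
Qed.

Lemma eval_rejected p a cx sx :
  eval p a (e_rejected cx sx) =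
  Nat.b2n (rejected (fun i => p (2 * i)) (p 1) (eval p a cx) (eval p a sx)).
Proof.
  unfold e_rejected, rejected, count_words. rewrite eval_ltb. cbn [eval].
  rewrite eval_pow2, <- !sum_over_codes. cbn [eval]. do 3 f_equal.
  - unfold e_count_survivors. rewrite eval_sum, eval_pow2. apply nsum_ext. intros j _.
    rewrite eval_survives, eval_word_code, !eval_lift0. reflexivity.
  - unfold e_count_extensions. rewrite eval_sum, eval_pow2. apply nsum_ext. intros j _.
    rewrite eval_prefixb, code_prefixb_correct, eval_word_code, eval_lift0. reflexivity.
Qed.

(** Cantor's enumeration of pairs: [n] lies on diagonal [diag n], at
    position [unpair_snd n]; every pair [(c, s)] is enumerated. *)
Fixpoint tri (n : nat) : nat := match n with 0 => 0 | S m => tri m + S m end.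
Definition diag (n : nat) : nat := nsum (S n) (fun t => Nat.b2n (tri (S t) <? S n)).
Definition unpair_snd (n : nat) : nat := n - tri (diag n).
Definition unpair_fst (n : nat) : nat := diag n - unpair_snd n.

Lemma tri_mono a b : a <= b -> tri a <= tri b.
Proof. induction 1; simpl; lia. Qed.

Lemma tri_ge m : m <= tri m.
Proof. induction m; simpl; lia. Qed.

Lemma unpair_onto c s : exists n, unpair_fst n = c /\ unpair_snd n = s.
Proof.
  exists (tri (c + s) + s).
  assert (Hdiag : diag (tri (c + s) + s) = c + s).
  { unfold diag. rewrite (nsum_ext _ _ (fun t => Nat.b2n (t <? c + s))).
    - apply nsum_below. pose proof (tri_ge (c + s)). lia.
    - intros t _. f_equal. destruct (Nat.ltb_spec t (c + s)).
      + apply Nat.ltb_lt. pose proof (tri_mono (S t) (c + s) H). lia.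
      + apply Nat.ltb_ge. pose proof (tri_mono (S (c + s)) (S t) ltac:(lia)).
        cbn [tri] in *. lia. }
  unfold unpair_fst, unpair_snd. rewrite Hdiag. lia.
Qed.

Definition e_tri (x : expr) : expr := ERec x (EConst 0) (EAdd (EVar 1) (ESucc (EVar 0))).
Definition e_diag : expr :=
  e_sum (ESucc (EVar 0)) (e_ltb (e_tri (ESucc (EVar 0))) (ESucc (EVar 1))).
Definition e_unpair_snd : expr := ESub (EVar 0) (e_tri e_diag).
Definition e_unpair_fst : expr := ESub e_diag e_unpair_snd.

Lemma eval_tri p a x : eval p a (e_tri x) = tri (eval p a x).
Proof. simpl. induction (eval p a x); simpl; auto. Qed.

Lemma eval_diag p n : eval p [n] e_diag = diag n.
Proof.
  unfold e_diag, diag. rewrite eval_sum. apply nsum_ext. intros j _.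
  rewrite eval_ltb, eval_tri. reflexivity.
Qed.

Lemma eval_unpair_snd p n : eval p [n] e_unpair_snd = unpair_snd n.
Proof. unfold e_unpair_snd, unpair_snd. cbn [eval]. rewrite eval_tri, eval_diag. reflexivity. Qed.

Lemma eval_unpair_fst p n : eval p [n] e_unpair_fst = unpair_fst n.
Proof. unfold e_unpair_fst, unpair_fst. cbn [eval]. rewrite eval_unpair_snd, eval_diag. reflexivity. Qed.

(** The instance of C_N: position [n] enumerates [c + 1] when the word
    coded by [c = unpair_fst n] is rejected at stage [unpair_snd n]. *)
Definition rejection_name (q : baire) (k n : nat) : nat :=
  if rejected q k (unpair_fst n) (unpair_snd n) then S (unpair_fst n) else 0.

Definition e_rejection_name : expr :=
  e_if (e_rejected e_unpair_fst e_unpair_snd) (ESucc e_unpair_fst) (EConst 0).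

Lemma eval_rejection_name p n :
  eval p [n] e_rejection_name = rejection_name (fun i => p (2 * i)) (p 1) n.
Proof.
  unfold e_rejection_name, rejection_name.
  rewrite (eval_if _ _ _ _ _ (rejected (fun i => p (2 * i)) (p 1) (unpair_fst n) (unpair_snd n))).
  - destruct rejected; cbn [eval]; rewrite ?eval_unpair_fst; reflexivity.
  - rewrite eval_rejected, eval_unpair_fst, eval_unpair_snd. reflexivity.
Qed.

Lemma rejection_name_names q k c :
  (~ exists i, rejection_name q k i = S c) <-> forall s, rejected q k c s = false.
Proof.
  unfold rejection_name. split.
  - intros H s. apply not_true_iff_false. intros E.
    destruct (unpair_onto c s) as [n [Hc Hs]]. apply H. exists n.
    rewrite Hc, Hs, E. reflexivity.
  - intros H [i Hi]. destruct (rejected q k (unpair_fst i) (unpair_snd i)) eqn:E;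
      [|discriminate].
    injection Hi as Hi. rewrite Hi, H in E. discriminate.
Qed.

(** ** Soundness: never-rejected words are dense *)

(** Interleaving a cover [cc] of [A /\ [w]] with the cylinders enumerated in
    the complement of [A] gives a cover of all of [[w]]. *)
Definition interleave (cc : nat -> option (list bool)) (q : baire) (i : nat)
    : option (list bool) :=
  if Nat.even i then cc (Nat.div2 i)
  else match q (Nat.div2 i) with 0 => None | S m => Some (word_of_nat m) end.

Lemma interleave_covers q cc w :
  covers cc (fun x => closed_named q x /\ is_prefix w x) ->
  forall x, is_prefix w x -> exists i v, interleave cc q i = Some v /\ is_prefix v x.
Proof.
  intros Hcc x Hx. destruct (classic (closed_named q x)) as [HA|HA].
  - destruct (Hcc x (conj HA Hx)) as [i [v [H1 H2]]]. exists (2 * i), v.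
    unfold interleave. rewrite Nat.even_mul, Nat.div2_double. auto.
  - unfold closed_named in HA.
    apply not_all_ex_not in HA as [i HA]. apply not_all_ex_not in HA as [m HA].
    apply imply_to_and in HA as [Hq HA]. apply NNPP in HA.
    exists (S (2 * i)), (word_of_nat m). split; auto.
    unfold interleave. rewrite Nat.even_succ, Nat.odd_even, Nat.div2_succ_double, Hq.
    reflexivity.
Qed.

(** By compactness of [[w]], the surviving extensions of [w] of any large
    enough length [D] are counted by finitely many cylinders of [cc]. *)
Lemma survivors_weight q w cc :
  covers cc (fun x => closed_named q x /\ is_prefix w x) ->
  exists N D0, forall D, D0 <= D ->
    (INR (count_words (survives q w D) (all_words D)) <= 2 ^ D * psum cc N)%R.
Proof.
  intros Hcc. destruct (cylinder_compact _ w (interleave_covers q cc w Hcc)) as [N HN].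
  exists N, (Nat.max (max_len cc N) (Nat.max (max_len (interleave cc q) N) N)).
  intros D HD. apply count_le_cover_weight.
  { intros i v Hi Hv. pose proof (max_len_spec cc N i v Hi Hv). lia. }
  intros u Hu Hg. apply all_words_length in Hu.
  unfold survives in Hg. apply andb_true_iff in Hg as [Hwu Hfa].
  apply prefixb_zero_ext in Hwu as [_ Hwu].
  destruct (HN _ Hwu) as [i' [v [Hi' [Hdv Hv]]]].
  assert (Hvu : prefixb v u = true).
  { apply prefixb_zero_ext. split; auto.
    pose proof (max_len_spec _ N i' v Hi' Hdv). lia. }
  unfold interleave in Hdv. destruct (Nat.Even_or_Odd i') as [[i ->]|[i ->]].
  - rewrite Nat.even_mul, Nat.div2_double in Hdv. exists i, v. split; [lia | auto].
  - exfalso. replace (2 * i + 1) with (S (2 * i)) in Hdv by lia.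
    rewrite Nat.even_succ, Nat.odd_even, Nat.div2_succ_double in Hdv.
    rewrite all_lt_true in Hfa. specialize (Hfa i ltac:(lia)). unfold forbidden in Hfa.
    destruct (q i) as [|m]; [discriminate|]. injection Hdv as <-.
    simpl in Hfa. rewrite Nat.sub_0_r, Hvu in Hfa. discriminate.
Qed.

Section Densities.
Local Open Scope R_scope.

(** The proportion [C / (P W)] of surviving words among the [P W = 2^D]
    words of length [D] (of which [P = 2^(D-|w|)] extend [w]) compares to
    [(1 - 1/K) / W] as [C K] compares to [(K - 1) P]. *)
Lemma count_ratio (C K P W : R) : 0 < K -> 0 < P -> 0 < W ->
  ((K - 1) * P <= C * K <-> (1 - / K) * / W <= C * / (P * W)).
Proof.
  intros HK HP HW.
  assert (HPWK : 0 < P * W * K) by (apply Rmult_lt_0_compat; [apply Rmult_lt_0_compat|]; lra).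
  assert (E1 : (1 - / K) * / W * (P * W * K) = (K - 1) * P) by (field; lra).
  assert (E2 : C * / (P * W) * (P * W * K) = C * K) by (field; lra).
  split; intro H.
  - apply Rmult_le_reg_r with (P * W * K); [exact HPWK|]. rewrite E1, E2. exact H.
  - rewrite <- E1, <- E2. apply Rmult_le_compat_r; lra.
Qed.

Lemma rejected_ratio q k c D : (length (word_of_nat c) <= D)%nat ->
  let w := word_of_nat c in
  rejected q k c D = false <->
  (1 - / 2 ^ k) * / 2 ^ length w <=
  INR (count_words (survives q w D) (all_words D)) * / (2 ^ (D - length w) * 2 ^ length w).
Proof.
  intros HD w. rewrite <- count_ratio by apply pow2_posR.
  rewrite <- count_extensions_R by exact HD. unfold rejected. fold w.
  rewrite Nat.ltb_ge. split; intro H.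
  - apply le_INR in H. rewrite !mult_INR, minus_INR, INR_pow2 in H by apply pow2_pos.
    simpl INR in H. lra.
  - apply INR_le. rewrite !mult_INR, minus_INR, INR_pow2 by apply pow2_pos. simpl INR. lra.
Qed.

Lemma never_rejected_dense q k c :
  (forall s, rejected q k c s = false) ->
  mu_ge (fun x => closed_named q x /\ is_prefix (word_of_nat c) x)
        ((1 - / 2 ^ k) * / 2 ^ length (word_of_nat c)).
Proof.
  intros Hnr cc Hcc r' Hr'. set (w := word_of_nat c) in *.
  destruct (survivors_weight q w cc Hcc) as [N [D0 HD0]]. exists N.
  set (D := Nat.max D0 (length w)).
  specialize (HD0 D ltac:(lia)). rewrite (pow2_split D (length w)) in HD0 by lia.
  pose proof (proj1 (rejected_ratio q k c D (Nat.le_max_r D0 (length w))) (Hnr D)) as Hd.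
  fold w in Hd.
  pose proof (pow2_posR (D - length w)). pose proof (pow2_posR (length w)).
  assert (INR (count_words (survives q w D) (all_words D))
          * / (2 ^ (D - length w) * 2 ^ length w) <= psum cc N); [|lra].
  apply Rmult_le_reg_r with (2 ^ (D - length w) * 2 ^ length w); [nra|].
  rewrite Rmult_assoc, Rinv_l; nra.
Qed.

End Densities.

(** ** Nonemptiness: some word is never rejected *)

Section Nonemptiness.
Local Open Scope R_scope.

Definition weight (l : list (list bool)) : R :=
  fold_right (fun u acc => / 2 ^ length u + acc) 0 l.

Lemma weight_app l1 l2 : weight (l1 ++ l2) = weight l1 + weight l2.
Proof. induction l1; simpl; lra. Qed.

Lemma weight_nonneg l : 0 <= weight l.
Proof.
  induction l; simpl; [lra|].
  pose proof (Rinv_0_lt_compat _ (pow2_posR (length a))). lra.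
Qed.

Lemma weight_same_length l s :
  (forall u, In u l -> length u = s) -> weight l = INR (length l) * / 2 ^ s.
Proof.
  induction l as [|a l IH]; intros H; [simpl; lra|].
  cbn [length]. rewrite S_INR. change (weight (a :: l)) with (/ 2 ^ length a + weight l).
  rewrite IH by (intros u Hu; apply H; right; exact Hu).
  rewrite (H a) by (left; reflexivity). lra.
Qed.

Lemma count_words_filter (g : list bool -> bool) l :
  count_words g l = length (filter g l).
Proof. unfold count_words. induction l; simpl; auto. destruct (g a); simpl; lia. Qed.

Lemma psum_list_le_weight l N : psum (fun i => nth_error l i) N <= weight l.
Proof.
  revert N; induction l as [|a l IH]; intros N.
  - induction N; simpl; [lra|]. destruct N; simpl in *; lra.
  - assert (Hshift : forall c M, psum c (S M) = cyl_weight (c 0%nat) + psum (fun i => c (S i)) M)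
      by (intros c M; induction M; simpl in *; lra).
    destruct N; [pose proof (weight_nonneg (a :: l)); simpl in *; lra|].
    rewrite Hshift. simpl. specialize (IH N). lra.
Qed.

Lemma small_list_covers_null (S : cantor -> Prop) (d : R) : 0 <= d < 1 ->
  (forall j, exists L, weight L <= d ^ j /\
     forall x, S x -> exists v, In v L /\ is_prefix v x) ->
  ~ mu_pos S.
Proof.
  intros Hd Hcov [r [Hr Hmu]].
  destruct (pow_lt_1_zero d ltac:(rewrite Rabs_pos_eq; lra) r Hr) as [j Hj].
  specialize (Hj j (le_n _)). rewrite Rabs_pos_eq in Hj by (apply pow_le; lra).
  destruct (Hcov j) as [L [HL HLc]].
  destruct (Hmu (fun i => nth_error L i)) with (r' := d ^ j) as [N HN]; auto.
  - intros x Hx. destruct (HLc x Hx) as [v [Hv Hvx]].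
    apply In_nth_error in Hv as [i Hi]. eauto.
  - pose proof (psum_list_le_weight L N). lra.
Qed.

Lemma iterated_refinement (S : cantor -> Prop) (d : R) (U : list bool -> list (list bool)) :
  0 <= d ->
  (forall w, weight (U w) <= d * / 2 ^ length w) ->
  (forall w x, S x -> is_prefix w x -> exists u, In u (U w) /\ is_prefix u x) ->
  forall j, exists L, weight L <= d ^ j /\
    forall x, S x -> exists v, In v L /\ is_prefix v x.
Proof.
  intros Hd HU HUc j. induction j as [|j [L [HL HLc]]].
  - exists [[]]. split; [simpl; lra|]. intros x _. exists []. split; [simpl; auto|].
    intros t Ht; simpl in Ht; lia.
  - exists (flat_map U L). split.
    + assert (weight (flat_map U L) <= d * weight L); [|simpl; nra].
      clear HL HLc. induction L as [|a L IH]; simpl; [lra|].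
      rewrite weight_app. specialize (HU a). lra.
    + intros x Hx. destruct (HLc x Hx) as [v [Hv Hvx]].
      destruct (HUc v x Hx Hvx) as [u [Hu Hux]].
      exists u. split; auto. apply in_flat_map. eauto.
Qed.

Lemma rejected_small_cover q k c s :
  rejected q k c s = true ->
  let w := word_of_nat c in
  let U := filter (survives q w s) (all_words s) in
  weight U <= (1 - / 2 ^ k) * / 2 ^ length w /\
  forall x, closed_named q x -> is_prefix w x -> exists u, In u U /\ is_prefix u x.
Proof.
  intros Hrej w U.
  assert (Hws : (length w <= s)%nat).
  { apply Nat.nlt_ge. intro Hlt. unfold rejected in Hrej. fold w in Hrej.
    rewrite count_extensions in Hrej. replace (length w <=? s)%nat with false in Hrej
      by (symmetry; apply Nat.leb_gt; lia).
    rewrite Nat.mul_0_r in Hrej. discriminate. }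
  split.
  - rewrite (weight_same_length U s)
      by (intros u Hu; apply filter_In in Hu; apply all_words_length, Hu).
    unfold U. rewrite <- count_words_filter, (pow2_split s (length w)) by exact Hws.
    apply Rlt_le, Rnot_le_lt. intro Hle.
    apply (rejected_ratio q k c s Hws) in Hle. congruence.
  - intros x HA Hx. exists (prefix_of x s). split; [|apply prefix_of_is_prefix].
    apply filter_In. split; [apply in_all_words, prefix_of_length|].
    apply andb_true_iff. split; [apply is_prefix_prefixb; auto|].
    apply all_lt_true. intros i _. apply negb_true_iff, not_true_iff_false.
    unfold forbidden. destruct (q i) as [|m] eqn:Eq; [discriminate|]. simpl.
    rewrite Nat.sub_0_r. intro Hm. apply (HA i m Eq).
    eapply prefixb_is_prefix; [exact Hm | apply prefix_of_is_prefix].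
Qed.

Lemma some_code_never_rejected q k :
  mu_pos (closed_named q) -> exists c, forall s, rejected q k c s = false.
Proof.
  intros Hpos. apply NNPP. intro Hno.
  assert (Hrej : forall c, exists s, rejected q k c s = true).
  { intros c. apply NNPP. intro H. apply Hno. exists c. intros s.
    apply not_true_iff_false. intro H'. apply H. eauto. }
  set (stage := fun c => proj1_sig (constructive_indefinite_description _ (Hrej c))).
  assert (Hstage : forall w, rejected q k (nat_of_word w) (stage (nat_of_word w)) = true)
    by (intros w; exact (proj2_sig (constructive_indefinite_description _ (Hrej _)))).
  pose proof (Rinv_0_lt_compat _ (pow2_posR k)).
  assert (/ 2 ^ k <= 1) by (rewrite <- Rinv_1; apply Rinv_le_contravar;
    [lra | apply pow_R1_Rle; lra]).
  apply (small_list_covers_null (closed_named q) (1 - / 2 ^ k)); [lra| |exact Hpos].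
  apply (iterated_refinement _ _
    (fun w => filter (survives q w (stage (nat_of_word w))) (all_words (stage (nat_of_word w)))));
    [lra| |].
  - intros w. pose proof (rejected_small_cover q k _ _ (Hstage w)) as [HU _].
    rewrite word_of_nat_of_word in HU. exact HU.
  - intros w x HA Hx. pose proof (rejected_small_cover q k _ _ (Hstage w)) as [_ HU].
    rewrite word_of_nat_of_word in HU. exact (HU x HA Hx).
Qed.

End Nonemptiness.

Theorem LDL_le_C_N : sW_le LDL C_N.
Proof.
  apply sW_le_by_programs with (eK := e_rejection_name) (eH := EOracle (EVar 0)).
  intros p Ak HpA Hdom. simpl in HpA. injection HpA as <-. simpl in Hdom.
  set (q := fun i => p (2 * i)) in *.
  assert (Hname : forall c, (~ exists i, run e_rejection_name p i = S c) <->
                            forall s, rejected q (p 1) c s = false).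
  { intros c. rewrite <- rejection_name_names. unfold run.
    split; intros H [i Hi]; apply H; exists i; rewrite eval_rejection_name in *; exact Hi. }
  eexists. split; [reflexivity|]. split.
  - destruct (some_code_never_rejected q (p 1) Hdom) as [c Hc]. exists c. apply Hname, Hc.
  - intros r y Hy Hc. injection Hy as <-. simpl in Hc.
    eexists. split; [reflexivity|]. simpl. unfold run. cbn [eval nth].
    apply never_rejected_dense, Hname, Hc.
Qed.

Theorem theorem11p2 : sW_equiv LDL C_N.
Proof. split; [exact LDL_le_C_N | exact C_N_le_LDL]. Qed.
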